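(* Let $\boldsymbol{\mu}$ be a bandit model with $\mu_1>\mu_a$ for all $a\neq1$ and let $c_1,\dots,c_K>0$. For every $\boldsymbol{w}\in\Sigma_K$, \[ \inf_{\boldsymbol{\lambda}\in\mathrm{Alt}(\boldsymbol{\mu})}\sum_{a=1}^K\frac{w_a}{c_a}d(\mu_a,\lambda_a)=\min_{a\neq1}\left(\frac{w_1}{c_1}+\frac{w_a}{c_a}\right)I_{\frac{w_1/c_1}{w_1/c_1+w_a/c_a}}(\mu_1,\mu_a). \] Consequently \[ T^*(\boldsymbol{\mu})^{-1}=\sup_{\boldsymbol{w}\in\Sigma_K}\min_{a\neq1}\left(\frac{w_1}{c_1}+\frac{w_a}{c_a}\right)I_{\frac{w_1/c_1}{w_1/c_1+w_a/c_a}}(\mu_1,\mu_a),\qquad \boldsymbol{w}^*(\boldsymbol{\mu})=\arg\max_{\boldsymbol{w}\in\Sigma_K}\min_{a\neq1}\left(\frac{w_1}{c_1}+\frac{w_a}{c_a}\right)I_{\frac{w_1/c_1}{w_1/c_1+w_a/c_a}}(\mu_1,\mu_a). \]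
   Context: Rewards of the arms belong to a one-parameter natural exponential family $\{h(x)\exp(\theta_\mu x-b(\theta_\mu))\}$ parametrized by its mean $\mu$; $d(\mu,\mu')$ is the KL divergence between the members with means $\mu,\mu'$. $\Sigma_K$ is the probability simplex in $\mathbb{R}^K$. $\mathrm{Alt}(\boldsymbol{\mu})$ is the set of mean vectors $\boldsymbol{\lambda}$ of the family whose (unique) best arm differs from arm $1$, i.e. $\mathrm{Alt}(\boldsymbol{\mu})=\bigcup_{a\neq1}\{\boldsymbol{\lambda}:\lambda_a>\lambda_1\}$. For $\alpha\in[0,1]$, $I_\alpha(x,y)=\alpha\,d(x,\alpha x+(1-\alpha)y)+(1-\alpha)\,d(y,\alpha x+(1-\alpha)y)$. $T^*(\boldsymbol{\mu})^{-1}=\sup_{\boldsymbol{w}\in\Sigma_K}\inf_{\boldsymbol{\lambda}\in\mathrm{Alt}(\boldsymbol{\mu})}\sum_a\frac{w_a}{c_a}d(\mu_a,\lambda_a)$ and $\boldsymbol{w}^*(\boldsymbol{\mu})$ is the maximizing $\boldsymbol{w}$. *)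

From HB Require Import structures.
From mathcomp Require Import all_boot all_order all_algebra.
From mathcomp Require Import all_classical all_reals all_analysis.
Set Implicit Arguments. Unset Strict Implicit. Unset Printing Implicit Defensive.
Import Order.TTheory GRing.Theory Num.Theory.
Import numFieldNormedType.Exports.
Local Open Scope classical_set_scope.
Local Open Scope ring_scope.

(* A one-parameter (non-degenerate) natural exponential family, described by
   its natural parameter space Theta (a nonempty open interval) and its
   log-partition function b, differentiable on Theta with strictly increasing
   derivative b' (the mean map theta |-> mu = b'(theta)). *)
Record NEF (R : realType) := {
  nef_Theta : set R;
  nef_b : R -> R;
  nef_open : open nef_Theta;
  nef_itv : is_interval nef_Theta;
  nef_ne : nef_Theta !=set0;
  nef_derivable : forall t, nef_Theta t -> derivable nef_b t 1;
  nef_strict : forall s t, nef_Theta s -> nef_Theta t -> s < t ->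
     derive1 nef_b s < derive1 nef_b t }.

Section NEFdefs.
Context {R : realType} (F : NEF R).

Definition nef_means : set R := derive1 (nef_b F) @` nef_Theta F.

Definition nef_theta (mu : R) : R :=
  xget 0 [set t | nef_Theta F t /\ derive1 (nef_b F) t = mu].

Definition kl (mu mu' : R) : R :=
  nef_b F (nef_theta mu') - nef_b F (nef_theta mu)
  - mu * (nef_theta mu' - nef_theta mu).

Definition Ialpha (alpha x y : R) : R :=
  alpha * kl x (alpha * x + (1 - alpha) * y)
  + (1 - alpha) * kl y (alpha * x + (1 - alpha) * y).

Variable n : nat.  (* K = n.+1 arms, arm 1 is ord0 *)

Definition simplex (w : 'I_n.+1 -> R) : Prop :=
  (forall a, 0 <= w a) /\ \sum_a w a = 1.

Definition Alt (lam : 'I_n.+1 -> R) : Prop :=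
  (forall a, nef_means (lam a)) /\ (exists2 a, a != ord0 & lam ord0 < lam a).

Definition alt_obj (c mu w : 'I_n.+1 -> R) : \bar R :=
  ereal_inf [set (\sum_a (w a / c a) * kl (mu a) (lam a))%:E | lam in Alt].

Definition Tstar_inv (c mu : 'I_n.+1 -> R) : \bar R :=
  ereal_sup [set alt_obj c mu w | w in simplex].

Definition pair_obj (c mu w : 'I_n.+1 -> R) : \bar R :=
  \big[Order.min/+oo%E]_(a | a != ord0)
     ((w ord0 / c ord0 + w a / c a) *
      Ialpha ((w ord0 / c ord0) / (w ord0 / c ord0 + w a / c a))
             (mu ord0) (mu a))%:E.

Definition is_argmax (G : ('I_n.+1 -> R) -> \bar R) (w : 'I_n.+1 -> R) : Prop :=
  simplex w /\ G w = ereal_sup [set G v | v in simplex].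

End NEFdefs.

From Pilot Require Import Defs.
From HB Require Import structures.
From mathcomp Require Import all_boot all_order all_algebra.
From mathcomp Require Import all_classical all_reals all_analysis.
From mathcomp Require Import ring lra.
Set Implicit Arguments. Unset Strict Implicit.
Import Order.TTheory GRing.Theory Num.Theory.
Import numFieldNormedType.Exports.
Local Open Scope classical_set_scope.
Local Open Scope ring_scope.

(* In the infimum over Alt(mu), only the coordinates 1 and a of a challenger
   a matter, and they must cross.  KL in an exponential family is the Bregman
   divergence of the log-partition b, so with p = w1/c1, q = wa/ca and z the
   (p, q)-barycentre of mu_1 and mu_a, the compensation identity and the
   monotonicity of d(x, .) away from x give, for l1 < la,
     p d(mu_1, l1) + q d(mu_a, la) >= p d(mu_1, z) + q d(mu_a, z)
                                    = (p + q) I_{p/(p+q)}(mu_1, mu_a),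
   with equality approached by l1 < z < la close to z. *)

Section slopes.
Context {R : realType}.
Implicit Types (f : R -> R) (x r m : R).

Lemma derive1_ge_right_slopes f x r m : derivable f x 1 -> 0 < r ->
  (forall h, 0 < h < r -> m * h <= f (h + x) - f x) -> m <= derive1 f x.
Proof.
move=> df r0 slope; rewrite derive1E ['D_1 f x]cvg_at_rightE //.
apply: limr_ge.
  rewrite -(cvg_at_rightE (fun h : R => h^-1 *: ((f \o shift x) _ - f x))) //.
  apply: cvg_trans df; apply: cvg_app.
  move=> A [e e0 Ae]; exists e => // y ye y0; apply: Ae => //.
  exact/lt0r_neq0.
near=> h.
have h0 : 0 < h by near: h; exists 1 => /=.
have hr : h < r.
  near: h; exists r => //= y; rewrite /ball /= sub0r normrN.
  by move=> /(le_lt_trans (ler_norm _)).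
rewrite /= [_%:A]mulr1; change (m <= h^-1 * (f (h + x) - f x)).
rewrite mulrC ler_pdivlMr //.
by apply: slope; rewrite h0 hr.
Unshelve. all: by end_near. Qed.

Lemma derive1_le_left_slopes f x r m : derivable f x 1 -> 0 < r ->
  (forall h, - r < h < 0 -> m * h <= f (h + x) - f x) -> derive1 f x <= m.
Proof.
move=> df r0 slope; rewrite derive1E ['D_1 f x]cvg_at_leftE //.
apply: limr_le.
  rewrite -(cvg_at_leftE (fun h : R => h^-1 *: ((f \o shift x) _ - f x))) //.
  apply: cvg_trans df; apply: cvg_app.
  move=> A [e e0 Ae]; exists e => // y ye y0; apply: Ae => //.
  exact/ltr0_neq0.
near=> h.
have h0 : h < 0 by near: h; exists 1 => /=.
have hr : - r < h.
  near: h; exists r => //= y; rewrite /ball /= sub0r normrN => /ltr_normlP[].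
  by rewrite ltrNl.
rewrite /= [_%:A]mulr1; change (h^-1 * (f (h + x) - f x) <= m).
rewrite mulrC ler_ndivrMr //.
by apply: slope; rewrite h0 hr.
Unshelve. all: by end_near. Qed.

End slopes.

Section natural_parameter.
Context {R : realType} (F : NEF R).
Local Notation D := (nef_Theta F).
Local Notation b := (nef_b F).
Local Notation b' := (derive1 (nef_b F)).
Local Notation th := (nef_theta F).
Local Notation M := (nef_means F).

Lemma nef_thetaP m : M m -> D (th m) /\ b' (th m) = m.
Proof.
case=> t Dt <-; have := @xgetPex R 0 [set u | D u /\ b' u = b' t].
by apply; exists t.
Qed.

Lemma nef_derive_le s t : D s -> D t -> (b' s <= b' t) = (s <= t).
Proof.
move=> Ds Dt; case: (ltgtP s t) => [st|ts|<-]; last exact: lexx.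
- exact/ltW/nef_strict.
- by apply/negbTE; rewrite -ltNge; exact: nef_strict.
Qed.

Lemma nef_thetaK t : D t -> th (b' t) = t.
Proof.
move=> Dt; have [Dth eth] : D (th (b' t)) /\ b' (th (b' t)) = b' t.
  by apply: nef_thetaP; exists t.
by apply/le_anti; rewrite -(nef_derive_le Dth Dt) -(nef_derive_le Dt Dth) eth lexx.
Qed.

Lemma nef_Theta_segment s t u : D s -> D t -> s <= u <= t -> D u.
Proof. by move=> Ds Dt; apply: (nef_itv Ds Dt). Qed.

Lemma nef_derivable_segment s t : D s -> D t ->
  forall u, u \in `[s, t] -> derivable b u 1.
Proof.
move=> Ds Dt u; rewrite in_itv /= => su.
exact/nef_derivable/(nef_Theta_segment Ds Dt su).
Qed.

Lemma nef_b_convex s t : D s -> D t -> b' s * (t - s) <= b t - b s.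
Proof.
move=> Ds Dt.
have mvt x y : D x -> D y -> x < y ->
    exists2 c, D c /\ x < c < y & b y - b x = b' c * (y - x).
  move=> Dx Dy xy; have db := nef_derivable_segment Dx Dy.
  have [c cxy ->] : exists2 c, c \in `]x, y[ & b y - b x = b' c * (y - x).
    apply: MVT => // [z zxy|]; last exact: derivable_within_continuous.
    by rewrite derive1E; apply/derivableP/db; rewrite (subset_itv_oo_cc zxy).
  exists c => //; rewrite !(itvP cxy); split => //.
  by apply: (nef_Theta_segment Dx Dy); rewrite !(itvP cxy).
case: (ltgtP s t) => [st|ts|<-]; last by rewrite !subrr mulr0.
- have [c [Dc /andP[sc _]] ->] := mvt _ _ Ds Dt st.
  apply: ler_wpM2r; first by rewrite subr_ge0 ltW.
  by rewrite nef_derive_le // ltW.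
- have [c [Dc /andP[_ cs]] e] := mvt _ _ Dt Ds ts.
  rewrite -[b t - b s]opprB e -(opprB s t) !mulrN lerN2.
  apply: ler_wpM2r; first by rewrite subr_ge0 ltW.
  by rewrite nef_derive_le // ltW.
Qed.

(* Darboux: b' need not be continuous, so minimise b u - m u on [s1, s2];
   the one-sided slopes at the minimiser rule out both endpoints and force
   b' c = m. *)
Lemma nef_means_interval m1 m2 m : M m1 -> M m2 -> m1 <= m <= m2 -> M m.
Proof.
move=> M1 M2 /andP[m1m mm2].
have [<-//|n1] := eqVneq m1 m; have [->//|n2] := eqVneq m m2.
have {n1}m1m : m1 < m by rewrite lt_neqAle n1.
have {n2}mm2 : m < m2 by rewrite lt_neqAle n2.
case: M1 => s1 D1 <- in m1m *; case: M2 => s2 D2 <- in mm2 *.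
have s12 : s1 < s2.
  by rewrite ltNge -(nef_derive_le D2 D1) -ltNge (lt_trans m1m).
pose g u := b u - m * u.
have cg : {within `[s1, s2], continuous g}.
  apply: derivable_within_continuous => u su; apply: derivableB.
    exact: nef_derivable_segment su.
  exact: derivableM.
have [c cs12 cmin] := EVT_min (ltW s12) cg.
have /andP[s1c cs2] : s1 <= c <= s2 by rewrite !(itvP cs12).
have Dc : D c by apply: (nef_Theta_segment D1 D2); rewrite s1c cs2.
have dc : derivable b c 1 := nef_derivable Dc.
have above t : s1 <= t <= s2 -> m * (t - c) <= b t - b c.
  by move=> st; have := cmin t; rewrite in_itv /= /g => /(_ st); lra.
have right_ge : c < s2 -> m <= b' c.
  move=> cs; apply: (derive1_ge_right_slopes dc (r := s2 - c)); first lra.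
  by move=> h hr; have := above (h + c); rewrite addrK; apply; lra.
have left_le : s1 < c -> b' c <= m.
  move=> sc; apply: (derive1_le_left_slopes dc (r := c - s1)); first lra.
  by move=> h hr; have := above (h + c); rewrite addrK; apply; lra.
have {}cs2 : c < s2.
  rewrite lt_neqAle cs2 andbT; apply/eqP => ec.
  have sc : s1 < c by rewrite ec.
  by move: (left_le sc); rewrite ec leNgt mm2.
have {}s1c : s1 < c.
  rewrite lt_neqAle s1c andbT; apply/eqP => ec.
  by move: (right_ge cs2); rewrite -ec leNgt m1m.
by exists c => //; apply/le_anti; rewrite left_le // right_ge.
Qed.

End natural_parameter.

Section barycenter.
Context {R : realFieldType}.
Implicit Types p q x y : R.

Definition barycenter p q x y := p / (p + q) * x + (1 - p / (p + q)) * y.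

Lemma barycenter_weights p q x y : 0 <= p -> 0 <= q ->
  p * x + q * y = (p + q) * barycenter p q x y.
Proof.
move=> p0 q0; have [pq0|pq0] := eqVneq (p + q) 0.
  have [-> ->] : p = 0 /\ q = 0 by lra.
  by rewrite !mul0r !add0r mul0r.
by rewrite /barycenter; field.
Qed.

Lemma barycenter_between p q x y : 0 <= p -> 0 <= q -> y <= x ->
  y <= barycenter p q x y <= x.
Proof.
move=> p0 q0 yx; have [pq0|pq0] := eqVneq (p + q) 0.
  by rewrite /barycenter pq0 invr0 mulr0 mul0r subr0 mul1r add0r lexx yx.
have a01 : 0 <= p / (p + q) <= 1.
  have pq : 0 < p + q by rewrite lt_def pq0 addr_ge0.
  by rewrite divr_ge0 ?ler_pdivrMr //= ?mul1r; lra.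
rewrite /barycenter; move: (p / (p + q)) a01 => a /andP[a0 a1].
have : 0 <= a * (x - y) by rewrite mulr_ge0 ?subr_ge0.
have : 0 <= (1 - a) * (x - y) by rewrite mulr_ge0 ?subr_ge0.
rewrite !mulrBr !mulrBl !mul1r; lra.
Qed.

End barycenter.

Section divergence.
Context {R : realType} (F : NEF R).
Local Notation D := (nef_Theta F).
Local Notation b := (nef_b F).
Local Notation b' := (derive1 (nef_b F)).
Local Notation th := (nef_theta F).
Local Notation M := (nef_means F).
Local Notation kl := (kl F).

Lemma klxx m : kl m m = 0.
Proof. by rewrite /kl; ring. Qed.

Lemma kl_derive1 m t : D t -> kl m (b' t) = b t - b (th m) - m * (t - th m).
Proof. by move=> Dt; rewrite /Defs.kl nef_thetaK. Qed.

Lemma kl_ge0 m x : M m -> M x -> 0 <= kl m x.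
Proof.
move=> /nef_thetaP[Dm em] /nef_thetaP[Dx _].
by have := nef_b_convex Dm Dx; rewrite em /Defs.kl subr_ge0.
Qed.

Lemma kl_increment m x y : M x -> M y ->
  (x - m) * (th y - th x) <= kl m y - kl m x.
Proof.
move=> /nef_thetaP[Dx ex] /nef_thetaP[Dy _].
by have := nef_b_convex Dx Dy; rewrite ex /Defs.kl mulrBl; lra.
Qed.

Lemma le_nef_theta x y : M x -> M y -> x <= y -> th x <= th y.
Proof.
move=> /nef_thetaP[Dx ex] /nef_thetaP[Dy ey] xy.
by rewrite -(nef_derive_le Dx Dy) ex ey.
Qed.

Lemma kl_nondecreasing m x y : M x -> M y -> m <= x <= y -> kl m x <= kl m y.
Proof.
move=> Mx My /andP[mx xy]; rewrite -subr_ge0; apply: le_trans (kl_increment m Mx My).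
by rewrite mulr_ge0 // subr_ge0 // le_nef_theta.
Qed.

Lemma kl_nonincreasing m x y : M x -> M y -> y <= x <= m -> kl m x <= kl m y.
Proof.
move=> Mx My /andP[yx xm]; rewrite -subr_ge0; apply: le_trans (kl_increment m Mx My).
by rewrite mulr_le0 // subr_le0 // le_nef_theta.
Qed.

Lemma kl_compensation p q x y z l : p * x + q * y = (p + q) * z ->
  p * kl x l + q * kl y l = p * kl x z + q * kl y z + (p + q) * kl z l.
Proof.
move=> xyz; apply/eqP; rewrite -subr_eq0; apply/eqP.
transitivity (((p + q) * z - (p * x + q * y)) * (th l - th z)).
  by rewrite /Defs.kl; ring.
by rewrite xyz subrr mul0r.
Qed.

Lemma kl_derive1_cvg m t : D t -> kl m (b' u) @[u --> t] --> kl m (b' t).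
Proof.
move=> Dt; have cb : {for t, continuous b}.
  exact/differentiable_continuous/derivable1_diffP/nef_derivable.
have kl_near : {near t, (fun u => b u - b (th m) - m * (u - th m)) =1
                       (fun u => kl m (b' u))}.
  near=> u; rewrite /= kl_derive1 //; near: u.
  by apply: open_nbhs_nbhs; split => //; exact: nef_open.
apply: cvg_trans (near_eq_cvg kl_near) _.
rewrite /= kl_derive1 //; apply: cvgB; first by apply: cvgB => //; exact: cvg_cst.
by apply: cvgM; [exact: cvg_cst | apply: cvgB; [exact: cvg_id | exact: cvg_cst]].
Unshelve. all: by end_near. Qed.

Lemma Ialpha_barycenter (p q x y : R) : 0 <= p -> 0 <= q ->
  (p + q) * Ialpha F (p / (p + q)) x y
  = p * kl x (barycenter p q x y) + q * kl y (barycenter p q x y).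
Proof.
move=> p0 q0; have [pq0|pq0] := eqVneq (p + q) 0.
  have [-> ->] : p = 0 /\ q = 0 by lra.
  by rewrite !mul0r !add0r mul0r.
by rewrite /Ialpha -/(barycenter p q x y); field.
Qed.

Lemma Ialpha_le_kl_pair (p q x y l0 la : R) : 0 <= p -> 0 <= q ->
  M x -> M y -> M l0 -> M la -> y <= x -> l0 < la ->
  (p + q) * Ialpha F (p / (p + q)) x y <= p * kl x l0 + q * kl y la.
Proof.
move=> p0 q0 Mx My M0 Ma yx l0a; rewrite Ialpha_barycenter //.
have /andP[yz zx] := barycenter_between p0 q0 yx.
have xyz := barycenter_weights x y p0 q0.
move: (barycenter p q x y) yz zx xyz => z yz zx xyz.
have Mz : M z by apply: (nef_means_interval My Mx); rewrite yz zx.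
have pq0 : 0 <= p + q by rewrite addr_ge0.
(* If z lies outside ]l0, la[, compensate at the endpoint on z's side;
   otherwise move each divergence monotonically back to z. *)
have [zl0|l0z] := leP z l0.
  have := kl_compensation l0 xyz.
  have : 0 <= (p + q) * kl z l0 by rewrite mulr_ge0 // kl_ge0.
  have : q * kl y l0 <= q * kl y la.
    by rewrite ler_wpM2l // kl_nondecreasing // (le_trans yz zl0) ltW.
  lra.
have [laz|zla] := leP la z.
  have := kl_compensation la xyz.
  have : 0 <= (p + q) * kl z la by rewrite mulr_ge0 // kl_ge0.
  have : p * kl x la <= p * kl x l0.
    by rewrite ler_wpM2l // kl_nonincreasing // (le_trans laz zx) ltW.
  lra.
have : p * kl x z <= p * kl x l0 by rewrite ler_wpM2l // kl_nonincreasing // zx ltW.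
have : q * kl y z <= q * kl y la by rewrite ler_wpM2l // kl_nondecreasing // yz ltW.
lra.
Qed.

Lemma kl_pair_le_Ialpha_approx (p q x y e : R) : 0 <= p -> 0 <= q ->
  M x -> M y -> y <= x -> 0 < e ->
  exists l0 la, [/\ M l0, M la, l0 < la &
    p * kl x l0 + q * kl y la <= (p + q) * Ialpha F (p / (p + q)) x y + e].
Proof.
move=> p0 q0 Mx My yx e0; rewrite Ialpha_barycenter //.
have /andP[yz zx] := barycenter_between p0 q0 yx.
move: (barycenter p q x y) yz zx => z yz zx.
have [Dt et] : D (th z) /\ b' (th z) = z.
  by apply: nef_thetaP; apply: (nef_means_interval My Mx); rewrite yz zx.
move: (th z) Dt et => t Dt <-.
have kl_cvg_lt m (r : R) :
    \forall u \near t, r * kl m (b' u) < r * kl m (b' t) + e / 2.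
  have := cvgr_lt _ (cvgMl_tmp (a := r) (kl_derive1_cvg (m := m) Dt)).
  by apply; rewrite ltrDl divr_gt0.
have : \forall u \near t, [/\ D u, p * kl x (b' u) < p * kl x (b' t) + e / 2
                             & q * kl y (b' u) < q * kl y (b' t) + e / 2].
  near=> u; split; near: u; [|exact: kl_cvg_lt..].
  by apply: open_nbhs_nbhs; split => //; exact: nef_open.
case/nbhs_ballP => r /= r0 near_t.
have ball_t h : `|h| < r ->
    [/\ D (t + h), p * kl x (b' (t + h)) < p * kl x (b' t) + e / 2
                & q * kl y (b' (t + h)) < q * kl y (b' t) + e / 2].
  by move=> hr; apply: near_t; rewrite /ball /= opprD addNKr normrN.
have r2 : `|r / 2| < r by rewrite gtr0_norm; lra.
have [Da _ ka] := ball_t _ r2.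
rewrite -normrN in r2; have [D0 k0 _] := ball_t _ r2.
exists (b' (t - r / 2)), (b' (t + r / 2)).
split; [by exists (t - r / 2) | by exists (t + r / 2) | | lra].
by apply: nef_strict => //; lra.
Unshelve. all: by end_near. Qed.

End divergence.

Lemma sum_split_ord0 (V : nmodType) n (f : 'I_n.+1 -> V) a : a != ord0 ->
  \sum_i f i = f ord0 + f a + \sum_(i | (i != ord0) && (i != a)) f i.
Proof. by move=> a0; rewrite (bigD1 ord0) //= (bigD1 a) //= addrA. Qed.

Section alternative_bandits.
Context {R : realType} (F : NEF R) (n : nat) (mu c w : 'I_n.+1 -> R).
Hypothesis mu_means : forall a, nef_means F (mu a).
Hypothesis mu_best : forall a, a != ord0 -> mu a < mu ord0.
Hypothesis c_gt0 : forall a, 0 < c a.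
Hypothesis w_ge0 : forall a, 0 <= w a.

Let wc_ge0 a : 0 <= w a / c a.
Proof. by rewrite divr_ge0 // ltW. Qed.

Lemma pair_obj_le_alt_obj : (pair_obj F c mu w <= alt_obj F c mu w)%E.
Proof.
apply: le_ereal_inf_tmp => _ [lam [lam_means [a a0 lam_a]] <-].
rewrite /pair_obj (bigD1 a) //= ge_min lee_fin (sum_split_ord0 _ a0); apply/orP; left.
apply: le_trans (Ialpha_le_kl_pair (wc_ge0 _) (wc_ge0 _) (mu_means _) (mu_means _)
  (lam_means _) (lam_means _) (ltW (mu_best a0)) lam_a) _.
by rewrite lerDl; apply: sumr_ge0 => i _; rewrite mulr_ge0 ?kl_ge0.
Qed.

Lemma alt_obj_le_pair_obj : (alt_obj F c mu w <= pair_obj F c mu w)%E.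
Proof.
apply: le_bigmin => [|a a0]; first exact: leey.
apply/lee_addgt0Pr => e e0.
have [l0 [la [M0 Ma l0a kl_le]]] := kl_pair_le_Ialpha_approx
  (wc_ge0 ord0) (wc_ge0 a) (mu_means _) (mu_means _) (ltW (mu_best a0)) e0.
pose lam i := if i == ord0 then l0 else if i == a then la else mu i.
apply: ge_ereal_inf; exists (\sum_i (w i / c i) * kl F (mu i) (lam i))%:E.
  exists lam => //; split; last by exists a; rewrite // /lam eqxx (negbTE a0) eqxx.
  by move=> i; rewrite /lam; case: ifP => _; [|case: ifP].
rewrite -EFinD lee_fin (sum_split_ord0 _ a0) /lam eqxx (negbTE a0) eqxx big1 ?addr0 //.
by move=> i /andP[/negbTE -> /negbTE ->]; rewrite klxx mulr0.
Qed.

Lemma alt_obj_pair_obj : alt_obj F c mu w = pair_obj F c mu w.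
Proof. by apply/le_anti; rewrite alt_obj_le_pair_obj pair_obj_le_alt_obj. Qed.

End alternative_bandits.

Theorem proposition3 (R : realType) (F : NEF R) (n : nat)
    (mu c : 'I_n.+1 -> R)
    (hmu : forall a, nef_means F (mu a))
    (hbest : forall a, a != ord0 -> mu a < mu ord0)
    (hc : forall a, 0 < c a) :
  (forall w, simplex w -> alt_obj F c mu w = pair_obj F c mu w) /\
  Tstar_inv F c mu = ereal_sup [set pair_obj F c mu w | w in simplex (n:=n)] /\
  (forall w, is_argmax (alt_obj F c mu) w <-> is_argmax (pair_obj F c mu) w).
Proof.
have obj_eq w : simplex w -> alt_obj F c mu w = pair_obj F c mu w.
  by case=> w_ge0 _; exact: alt_obj_pair_obj.
have img_eq : [set alt_obj F c mu w | w in simplex (n:=n)] =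
              [set pair_obj F c mu w | w in simplex (n:=n)].
  by apply/seteqP; split=> _ [w sw <-]; exists w; rewrite ?obj_eq.
split=> //; split; first by rewrite /Tstar_inv img_eq.
by move=> w; rewrite /is_argmax img_eq; split=> -[sw]; rewrite obj_eq.
Qed.
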